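(* Let $k>0$, $l\ge0$, $\epsilon_r>0$, and define the mass-spring energy $p:\mathbb{R}^3\to\mathbb{R}$, $p(d)=\frac k2\big(\sqrt{d^Td+\epsilon_r}-l\big)^2$. Then $p\ge0$, $p$ is twice differentiable with locally Lipschitz second derivatives, and $p$ is $L$-curvature bounded for a constant $L$ depending only on $k,l,\epsilon_r$ (in particular independent of any relaxation parameter $L_2$); hence taking the relaxation $\bar p=p$ gives $\bar p=p$ whenever $\bar p\le L_2$.
   Context: A function $\phi$ is $L$-curvature bounded if $\phi(x)+\frac L2\|x\|^2$ is convex and $\nabla\phi$ is $L$-Lipschitz. In applications $d$ is an edge vector depending linearly on the configuration. *)

From HB Require Import structures.
From mathcomp Require Import all_boot all_order all_algebra.
From mathcomp Require Import all_classical all_reals all_analysis.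
Set Implicit Arguments. Unset Strict Implicit. Unset Printing Implicit Defensive.
Import Order.TTheory GRing.Theory Num.Theory.
Import numFieldNormedType.Exports.
Local Open Scope ring_scope.

Section Defs.
Variable R : realType.

Definition dot3 (x y : 'rV[R]_3) : R := \sum_(i < 3) x 0 i * y 0 i.
Definition enorm3 (x : 'rV[R]_3) : R := Num.sqrt (dot3 x x).

Definition e3 (i : 'I_3) : 'rV[R]_3 := delta_mx 0 i.

Definition grad3 (f : 'rV[R]_3 -> R) (x : 'rV[R]_3) : 'rV[R]_3 :=
  \row_(i < 3) ('D_(e3 i) f x).

Definition hess3 (f : 'rV[R]_3 -> R) (x : 'rV[R]_3) : 'M[R]_3 :=
  \matrix_(i < 3, j < 3) ('D_(e3 j) (fun y => grad3 f y 0 i) x).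

Definition twice_differentiable3 (f : 'rV[R]_3 -> R) : Prop :=
  (forall x, differentiable f x) /\ (forall x, differentiable (grad3 f) x).

Definition hess_locally_lipschitz3 (f : 'rV[R]_3 -> R) : Prop :=
  forall x : 'rV[R]_3, exists2 r : R, 0 < r & exists C : R,
    forall y z : 'rV[R]_3, enorm3 (y - x) < r -> enorm3 (z - x) < r ->
      `|hess3 f y - hess3 f z| <= C * enorm3 (y - z).

Definition convex3 (g : 'rV[R]_3 -> R) : Prop :=
  forall (x y : 'rV[R]_3) (t : R), 0 <= t -> t <= 1 ->
    g (t *: x + (1 - t) *: y) <= t * g x + (1 - t) * g y.

Definition curvature_bounded3 (L : R) (phi : 'rV[R]_3 -> R) : Prop :=
  convex3 (fun x => phi x + L / 2 * (enorm3 x) ^+ 2) /\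
  (forall x y, enorm3 (grad3 phi x - grad3 phi y) <= L * enorm3 (x - y)).

Definition spring_energy (k l epsr : R) (d : 'rV[R]_3) : R :=
  k / 2 * (Num.sqrt (dot3 d d + epsr) - l) ^+ 2.

End Defs.

From HB Require Import structures.
From mathcomp Require Import all_boot all_order all_algebra.
From mathcomp Require Import all_classical all_reals all_analysis.
From mathcomp Require Import ring lra.
Import Order.TTheory GRing.Theory Num.Theory.
Import numFieldNormedType.Exports.
Local Open Scope ring_scope.

(* The energy is p = k/2 (S - l)^2 with S x = sqrt (|x|^2 + e), the Euclidean
   norm of (x, sqrt e) in R^4, so S >= sqrt e > 0 and p is smooth.  Everything
   follows from three facts on S: S is 1-Lipschitz, its gradient x / S x is
   (1 / sqrt e)-Lipschitz, and |x|^2 / (2 sqrt e) - S x is convex.  Indeed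
   grad p x = k x - k l x / S x is L-Lipschitz for L = k + k l / sqrt e;
   p + L/2 |x|^2 is (k + k l / (2 sqrt e)) |x|^2 - k l S x up to a constant, hence
   convex; and Hess p = (k - k l / S) I + k l (x / S) (x / S)^T / S is entrywise
   (4 k l / e)-Lipschitz. *)

Lemma ler_distM3 {R : numDomainType} (u1 u2 u3 v1 v2 v3 B1 B2 B3 : R) :
  `|u2| <= B2 -> `|u3| <= B3 -> `|v1| <= B1 -> `|v2| <= B2 ->
  `|u1 * u2 * u3 - v1 * v2 * v3| <=
    B2 * B3 * `|u1 - v1| + B1 * B3 * `|u2 - v2| + B1 * B2 * `|u3 - v3|.
Proof.
move=> u2B u3B v1B v2B.
have -> : u1 * u2 * u3 - v1 * v2 * v3 =
    (u1 - v1) * (u2 * u3) + v1 * u3 * (u2 - v2) + v1 * v2 * (u3 - v3) by ring.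
apply: le_trans (ler_normD _ _) _; apply: lerD; last first.
  by rewrite normrM ler_wpM2r // normrM ler_pM.
apply: le_trans (ler_normD _ _) _; rewrite !normrM; apply: lerD.
  by rewrite mulrC ler_wpM2r // ler_pM.
by rewrite ler_wpM2r // ler_pM.
Qed.

Section Calculus.
Context {R : realType}.

Lemma scalerR (a b : R) : a *: b = a * b.
Proof. by []. Qed.

Lemma is_derive_coord {m n : nat} (x v : 'M[R]_(m, n)) i j :
  is_derive x v (fun y : 'M[R]_(m, n) => y i j) (v i j).
Proof.
apply: DeriveDef; first exact/diff_derivable/differentiable_coord.
by have /matrixP/(_ i j) := derive_mx (@derivable_id _ _ x v); rewrite derive_id mxE.
Qed.

Lemma differentiable_row {V : normedModType R} n (f : V -> 'rV[R]_n) x :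
  (forall i, differentiable (fun y => f y 0 i) x) -> differentiable f x.
Proof.
move=> df; rewrite (_ : f = \sum_(i < n) (fun y => f y 0 i *: delta_mx 0 i)).
  by apply: differentiable_sum => i; apply: differentiableZl.
by rewrite fct_sumE; apply/funext => y; rewrite [LHS]row_sum_delta.
Qed.

Lemma differentiable_sqrt {V : normedModType R} {f : V -> R} {x : V} :
  differentiable f x -> 0 < f x -> differentiable (fun y => Num.sqrt (f y)) x.
Proof.
move=> df fx_gt0; apply: (differentiable_comp df).
by apply/derivable1_diffP; case: (is_derive1_sqrt fx_gt0).
Qed.

Lemma is_derive_inv {V : normedModType R} {f : V -> R} {x v : V} {df : R} :
  f x != 0 -> is_derive x v f df ->
  is_derive x v (fun y => (f y)^-1) (- (f x) ^- 2 * df).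
Proof.
move=> fx_neq0 [df_ex dfv]; apply: DeriveDef; first exact: derivableV.
by rewrite deriveV // dfv.
Qed.

Lemma is_derive_sqrt {V : normedModType R} {f : V -> R} {x v : V} {df : R} :
  differentiable f x -> 0 < f x -> is_derive x v f df ->
  is_derive x v (fun y => Num.sqrt (f y)) (df / (2 * Num.sqrt (f x))).
Proof.
move=> fd fx_gt0 [_ dfv].
have sd : differentiable (@Num.sqrt R) (f x).
  by apply/derivable1_diffP; case: (is_derive1_sqrt fx_gt0).
apply: DeriveDef; first exact/diff_derivable/differentiable_sqrt.
rewrite (deriveE _ (differentiable_sqrt fd fx_gt0)) diff_comp // /= diff1E //.
by rewrite -(deriveE _ fd) dfv derive1E derive_sqrt.
Qed.

Lemma mx_norm_le m n (M : 'M[R]_(m, n)) c :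
  0 <= c -> (forall i j, `|M i j| <= c) -> `|M| <= c.
Proof.
move=> c_ge0 le_c; rewrite [`|M|]mx_normrE.
by apply: bigmax_le => // -[i j] _; exact: le_c.
Qed.

End Calculus.

Section Dot3.
Context {R : realType}.
Implicit Types (x y : 'rV[R]_3) (a b : R).

Lemma dot3E x y : dot3 x y = x 0 0 * y 0 0 + x 0 1 * y 0 1 + x 0 2 * y 0 2.
Proof.
rewrite /dot3 !big_ord_recl big_ord0 addr0 addrA.
by congr (_ * _ + _ * _ + _ * _); congr (_ _ _); apply/val_inj.
Qed.

Lemma dot3_ge0 x : 0 <= dot3 x x.
Proof. by rewrite sumr_ge0 // => i _; rewrite -expr2 sqr_ge0. Qed.

Lemma dot3_e3 x (i : 'I_3) : dot3 x (e3 R i) = x 0 i.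
Proof.
rewrite /dot3 (bigD1 i) //= big1 => [|j ji]; rewrite mxE.
  by rewrite !eqxx mulr1 addr0.
by rewrite (negbTE ji) andbF mulr0.
Qed.

Lemma coord_sqr_le_dot3 x (i : 'I_3) : x 0 i ^+ 2 <= dot3 x x.
Proof.
rewrite /dot3 (bigD1 i) //= expr2 lerDl.
by rewrite sumr_ge0 // => j _; rewrite -expr2 sqr_ge0.
Qed.

Lemma dot3_cauchy_schwarz x y : dot3 x y ^+ 2 <= dot3 x x * dot3 y y.
Proof.
rewrite -subr_ge0 !dot3E.
set x0 := x 0 0; set x1 := x 0 1; set x2 := x 0 2.
set y0 := y 0 0; set y1 := y 0 1; set y2 := y 0 2.
have -> : (x0 * x0 + x1 * x1 + x2 * x2) * (y0 * y0 + y1 * y1 + y2 * y2)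
    - (x0 * y0 + x1 * y1 + x2 * y2) ^+ 2 =
  (x0 * y1 - x1 * y0) ^+ 2 + (x0 * y2 - x2 * y0) ^+ 2 + (x1 * y2 - x2 * y1) ^+ 2.
  by ring.
by rewrite !addr_ge0 ?sqr_ge0.
Qed.

Lemma sqr_enorm3 x : enorm3 x ^+ 2 = dot3 x x.
Proof. by rewrite sqr_sqrtr ?dot3_ge0. Qed.

Lemma enorm3_ge0 x : 0 <= enorm3 x.
Proof. exact: sqrtr_ge0. Qed.

Lemma enorm3Z a x : enorm3 (a *: x) = `|a| * enorm3 x.
Proof.
rewrite /enorm3 (_ : dot3 _ _ = a ^+ 2 * dot3 x x); last by rewrite !dot3E !mxE; ring.
by rewrite sqrtrM ?sqr_ge0 // sqrtr_sqr.
Qed.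

Lemma dot3_le_enorm3 x y : dot3 x y <= enorm3 x * enorm3 y.
Proof.
rewrite (le_trans (ler_norm _)) // -sqrtr_sqr -sqrtrM ?dot3_ge0 //.
by rewrite ler_sqrt ?mulr_ge0 ?dot3_ge0 ?dot3_cauchy_schwarz.
Qed.

Lemma enorm3D x y : enorm3 (x + y) <= enorm3 x + enorm3 y.
Proof.
rewrite -ler_sqr ?nnegrE ?addr_ge0 ?enorm3_ge0 // sqrrD !sqr_enorm3.
rewrite (_ : dot3 _ _ = dot3 x x + 2 * dot3 x y + dot3 y y); last first.
  by rewrite !dot3E !mxE; ring.
rewrite -mulr_natl; have := dot3_le_enorm3 x y; lra.
Qed.

Lemma enorm3N x : enorm3 (- x) = enorm3 x.
Proof. by rewrite -scaleN1r enorm3Z normrN1 mul1r. Qed.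

Lemma sqr_enorm3_comb a b x y : enorm3 (a *: x + b *: y) ^+ 2 =
  a ^+ 2 * dot3 x x + 2 * a * b * dot3 x y + b ^+ 2 * dot3 y y.
Proof. by rewrite sqr_enorm3 !dot3E !mxE; ring. Qed.

Lemma sqr_enorm3B x y :
  enorm3 (x - y) ^+ 2 = dot3 x x - 2 * dot3 x y + dot3 y y.
Proof. by rewrite sqr_enorm3 !dot3E !mxE; ring. Qed.

Lemma coord_le_enorm3 x (i : 'I_3) : `|x 0 i| <= enorm3 x.
Proof. by rewrite -sqrtr_sqr ler_wsqrtr ?coord_sqr_le_dot3. Qed.

Lemma dot3_diagE :
  (fun y => dot3 y y) = \sum_(i < 3) ((fun y : 'rV[R]_3 => y 0 i) * (fun y => y 0 i)).
Proof. by rewrite fct_sumE. Qed.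

Lemma is_derive_dot3_diag x v : is_derive x v (fun y => dot3 y y) (2 * dot3 x v).
Proof.
rewrite dot3_diagE; apply: is_derive_eq.
  by apply: is_derive_sum => i; apply: is_deriveM; apply: is_derive_coord.
by rewrite /dot3 mulr_sumr; apply: eq_bigr => i _; rewrite /= mulr2n mulrDl mul1r.
Qed.

Lemma differentiable_dot3_diag x : differentiable (fun y => dot3 y y) x.
Proof.
rewrite dot3_diagE; apply: differentiable_sum => i.
by apply: differentiableM; apply: differentiable_coord.
Qed.

End Dot3.

Section RegularizedNorm.
Context {R : realType} (e : R).
Hypothesis e_gt0 : 0 < e.
Implicit Types (x y : 'rV[R]_3) (t : R).

Definition snorm x : R := Num.sqrt (dot3 x x + e).

Local Notation r := (Num.sqrt e).

Lemma sqr_snorm x : snorm x ^+ 2 = dot3 x x + e.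
Proof. by rewrite sqr_sqrtr // addr_ge0 ?dot3_ge0 ?ltW. Qed.

Lemma sqrt_le_snorm x : r <= snorm x.
Proof. by apply: ler_wsqrtr; rewrite lerDr dot3_ge0. Qed.

Lemma snorm_gt0 x : 0 < snorm x.
Proof. by apply: lt_le_trans (sqrt_le_snorm x); rewrite sqrtr_gt0. Qed.

Lemma enorm3_le_snorm x : enorm3 x <= snorm x.
Proof. by apply: ler_wsqrtr; rewrite lerDl ltW. Qed.

Lemma dot3_le_snorm_mul x y : dot3 x y + e <= snorm x * snorm y.
Proof.
apply: le_trans (_ : enorm3 x * enorm3 y + e <= _); first by rewrite lerD2r dot3_le_enorm3.
have uv_e : 0 <= enorm3 x * enorm3 y + e by rewrite addr_ge0 ?mulr_ge0 ?enorm3_ge0 ?ltW.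
rewrite /snorm -[leRHS]sqrtrM; last by rewrite addr_ge0 ?dot3_ge0 ?ltW.
rewrite -(ger0_norm uv_e) -sqrtr_sqr ler_wsqrtr // -!sqr_enorm3 -subr_ge0.
have -> : (enorm3 x ^+ 2 + e) * (enorm3 y ^+ 2 + e) - (enorm3 x * enorm3 y + e) ^+ 2 =
  e * (enorm3 x - enorm3 y) ^+ 2 by ring.
by rewrite mulr_ge0 ?sqr_ge0 ?ltW.
Qed.

Lemma differentiable_snorm x : differentiable snorm x.
Proof.
apply: differentiable_sqrt; last by rewrite ltr_wpDl ?dot3_ge0.
exact: differentiableD (differentiable_dot3_diag x) (differentiable_cst e x).
Qed.

Lemma is_derive_snorm x v : is_derive x v snorm (dot3 x v / snorm x).
Proof.
apply: is_derive_eq.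
  apply: (@is_derive_sqrt _ _ (fun y => dot3 y y + e)).
  - exact: differentiableD (differentiable_dot3_diag x) (differentiable_cst e x).
  - by rewrite ltr_wpDl ?dot3_ge0.
  - exact: is_deriveD (is_derive_dot3_diag x v) (is_derive_cst e x v).
by rewrite addr0 -/(snorm x) invfM mulrACA mulfV // mul1r.
Qed.

Lemma snorm_lipschitz x y : `|snorm x - snorm y| <= enorm3 (x - y).
Proof.
rewrite -ler_sqr ?nnegrE ?enorm3_ge0 // real_normK ?num_real //.
rewrite sqrrB !sqr_snorm sqr_enorm3B -mulr_natr.
have := dot3_le_snorm_mul x y; lra.
Qed.

Lemma snorm_mul_ge x y : e <= snorm x * snorm y.
Proof.
rewrite -[e]sqr_sqrtr ?(ltW e_gt0) // expr2.
by apply: ler_pM; rewrite ?sqrtr_ge0 ?sqrt_le_snorm.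
Qed.

Lemma snormV_lipschitz x y :
  `|(snorm x)^-1 - (snorm y)^-1| <= enorm3 (x - y) / e.
Proof.
have a_gt0 := snorm_gt0 x; have b_gt0 := snorm_gt0 y.
have -> : (snorm x)^-1 - (snorm y)^-1 = (snorm y - snorm x) / (snorm x * snorm y).
  by field; rewrite !gt_eqF.
rewrite normrM normfV (gtr0_norm (mulr_gt0 a_gt0 b_gt0)) distrC.
apply: ler_pM => //; first by rewrite invr_ge0 ltW ?mulr_gt0.
  exact: snorm_lipschitz.
by rewrite lef_pV2 ?posrE ?mulr_gt0 ?snorm_mul_ge.
Qed.

Definition snormalize x := (snorm x)^-1 *: x.

Lemma snormalize_lipschitz x y :
  enorm3 (snormalize x - snormalize y) <= enorm3 (x - y) / r.
Proof.
set a := snorm x; set b := snorm y.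
have a_gt0 : 0 < a := snorm_gt0 x; have b_gt0 : 0 < b := snorm_gt0 y.
have ab_ge : e <= a * b := snorm_mul_ge x y.
have -> : snormalize x - snormalize y = a^-1 *: x + (- b^-1) *: y by rewrite scaleNr.
rewrite -ler_sqr ?nnegrE ?enorm3_ge0 ?divr_ge0 ?sqrtr_ge0 ?enorm3_ge0 //.
rewrite sqr_enorm3_comb expr_div_n [r ^+ 2]sqr_sqrtr ?(ltW e_gt0) //.
have key : b ^+ 2 * dot3 x x - 2 * a * b * dot3 x y + a ^+ 2 * dot3 y y <=
    a * b * enorm3 (x - y) ^+ 2.
  rewrite -subr_ge0 sqr_enorm3B.
  rewrite (_ : dot3 x x = a ^+ 2 - e); last by rewrite sqr_snorm addrK.
  rewrite (_ : dot3 y y = b ^+ 2 - e); last by rewrite sqr_snorm addrK.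
  rewrite (_ : _ - _ = (a - b) ^+ 2 * (a * b + e)); last by ring.
  by rewrite mulr_ge0 ?sqr_ge0 // addr_ge0 ?mulr_ge0 // ltW.
set D2 := enorm3 (x - y) ^+ 2 in key *.
have D2_ge0 : 0 <= D2 by rewrite sqr_ge0.
rewrite (_ : _ + _ = (b ^+ 2 * dot3 x x - 2 * a * b * dot3 x y + a ^+ 2 * dot3 y y)
  / (a * b) ^+ 2); last by field; rewrite !gt_eqF.
rewrite ler_pdivrMr ?exprn_gt0 ?mulr_gt0 //; apply: (le_trans key).
rewrite (_ : _ / e * _ = a * b * D2 * (a * b / e)); last by field; rewrite gt_eqF.
rewrite ler_peMr ?ler_pdivlMr ?mul1r //.
by apply: mulr_ge0 => //; apply: mulr_ge0; exact: ltW.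
Qed.

Lemma normr_snormV_le x : `|(snorm x)^-1| <= r^-1.
Proof.
by rewrite normfV (gtr0_norm (snorm_gt0 x)) lef_pV2 ?sqrt_le_snorm //
  posrE ?snorm_gt0 ?sqrtr_gt0.
Qed.

Lemma normr_snormalize_le1 x (i : 'I_3) : `|snormalize x 0 i| <= 1.
Proof.
rewrite mxE normrM normfV (gtr0_norm (snorm_gt0 x)) mulrC ler_pdivrMr ?snorm_gt0 // mul1r.
exact: le_trans (coord_le_enorm3 x i) (enorm3_le_snorm x).
Qed.

Lemma snormalize_coord_lipschitz x y (i : 'I_3) :
  `|snormalize x 0 i - snormalize y 0 i| <= enorm3 (x - y) / r.
Proof.
apply: le_trans (snormalize_lipschitz x y).
by rewrite (_ : _ - _ = (snormalize x - snormalize y) 0 i) ?coord_le_enorm3 // !mxE.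
Qed.

Lemma snormalize_outer_lipschitz x y (i j : 'I_3) :
  `|snormalize x 0 i * snormalize x 0 j / snorm x -
    snormalize y 0 i * snormalize y 0 j / snorm y| <= 3 * enorm3 (x - y) / e.
Proof.
have r_gt0 : 0 < r by rewrite sqrtr_gt0.
apply: le_trans (@ler_distM3 _ _ _ _ _ _ _ 1 1 r^-1 _ _ _ _) _;
  rewrite ?normr_snormalize_le1 ?normr_snormV_le //.
have coord_le (m : 'I_3) :
    r^-1 * `|snormalize x 0 m - snormalize y 0 m| <= enorm3 (x - y) / e.
  apply: le_trans (ler_wpM2l _ (snormalize_coord_lipschitz x y m)) _.
    by rewrite invr_ge0 ltW.
  by rewrite mulrCA -invfM -expr2 sqr_sqrtr // ltW.
set D := enorm3 (x - y).
rewrite !mul1r (_ : 3 * D / e = D / e + D / e + D / e); last by field; rewrite gt_eqF.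
by rewrite !lerD ?coord_le ?snormV_lipschitz.
Qed.

Lemma snorm_convex_gap x y t : 0 <= t -> t <= 1 ->
  t * snorm x + (1 - t) * snorm y - snorm (t *: x + (1 - t) *: y) <=
  t * (1 - t) * enorm3 (x - y) ^+ 2 / (2 * r).
Proof.
move=> t_ge0 t_le1.
set a := snorm x; set b := snorm y; set c := snorm _; set u := t * a + _.
have tt_ge0 : 0 <= t * (1 - t) by rewrite mulr_ge0 // subr_ge0.
have r_gt0 : 0 < r by rewrite sqrtr_gt0.
have gap_ge0 : 0 <= t * (1 - t) * enorm3 (x - y) ^+ 2 / (2 * r).
  by apply: divr_ge0; rewrite mulr_ge0 ?sqr_ge0 // ltW.
have [u_le_c|c_lt_u] := leP u c; first by rewrite (le_trans _ gap_ge0) // subr_le0.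
have sqr_c : c ^+ 2 = t ^+ 2 * dot3 x x + 2 * t * (1 - t) * dot3 x y +
    (1 - t) ^+ 2 * dot3 y y + e.
  by rewrite /c sqr_snorm -sqr_enorm3 sqr_enorm3_comb.
have sqr_gap : u ^+ 2 - c ^+ 2 <= t * (1 - t) * enorm3 (x - y) ^+ 2.
  rewrite sqr_c sqr_enorm3B.
  rewrite (_ : dot3 x x = a ^+ 2 - e); last by rewrite sqr_snorm addrK.
  rewrite (_ : dot3 y y = b ^+ 2 - e); last by rewrite sqr_snorm addrK.
  rewrite -subr_ge0 (_ : _ - _ = t * (1 - t) * (a - b) ^+ 2); last by rewrite /u; ring.
  by rewrite mulr_ge0 ?sqr_ge0.
have r_le_u : r <= u.
  have := sqrt_le_snorm x; have := sqrt_le_snorm y; rewrite -/a -/b /u; nra.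
have r_le_c : r <= c := sqrt_le_snorm _.
rewrite ler_pdivlMr ?mulr_gt0 //; nra.
Qed.

Lemma convex3_sqr_enorm3_sub_snorm (a b c : R) : 0 <= b -> b <= 2 * a * r ->
  convex3 (fun x => a * enorm3 x ^+ 2 - b * snorm x + c).
Proof.
move=> b_ge0 b_le x y t t_ge0 t_le1 /=.
have r_gt0 : 0 < r by rewrite sqrtr_gt0.
set G := t * (1 - t) * enorm3 (x - y) ^+ 2.
have G_ge0 : 0 <= G by rewrite mulr_ge0 ?sqr_ge0 // mulr_ge0 // subr_ge0.
have snorm_gap := snorm_convex_gap x y t t_ge0 t_le1; rewrite -/G in snorm_gap.
have bG_le_aG : b * (G / (2 * r)) <= a * G.
  rewrite (_ : b * _ = b / (2 * r) * G); last by ring.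
  by rewrite ler_wpM2r // ler_pdivrMr ?mulr_gt0 //; lra.
rewrite -subr_ge0.
rewrite (_ : _ - _ = a * G - b * (t * snorm x + (1 - t) * snorm y
    - snorm (t *: x + (1 - t) *: y))); last first.
  by rewrite /G sqr_enorm3_comb sqr_enorm3B !sqr_enorm3; ring.
rewrite subr_ge0 (le_trans _ bG_le_aG) // ler_wpM2l //.
Qed.

End RegularizedNorm.

Section SpringEnergy.
Context {R : realType} (k l e : R).
Hypotheses (k_gt0 : 0 < k) (l_ge0 : 0 <= l) (e_gt0 : 0 < e).

Local Notation p := (spring_energy k l e).
Local Notation S := (snorm e).
Local Notation r := (Num.sqrt e).

Lemma spring_energy_ge0 x : 0 <= p x.
Proof. by rewrite mulr_ge0 ?sqr_ge0 // divr_ge0 // ltW. Qed.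

Definition spring_scale x := k - k * l / S x.

Lemma is_derive_spring_energy x v : is_derive x v p (spring_scale x * dot3 x v).
Proof.
have -> : p = (k / 2) \*: ((S - cst l) ^+ 2) by apply/funext => y.
apply: is_derive_eq.
  apply: is_deriveZ; apply: is_deriveX.
  exact: is_deriveB (is_derive_snorm _ e_gt0 x v) (is_derive_cst l x v).
have S_neq0 : S x != 0 by rewrite gt_eqF ?snorm_gt0.
by rewrite /spring_scale /= !scalerR expr1 subr0 (_ : (S - cst l) x = S x - l) //; field.
Qed.

Lemma grad3_spring_energy x : grad3 p x = spring_scale x *: x.
Proof.
apply/rowP => i; rewrite !mxE.
by have [_ ->] := is_derive_spring_energy x (e3 R i); rewrite dot3_e3.
Qed.

Lemma is_derive_spring_scale x v :
  is_derive x v spring_scale (k * l * dot3 x v / S x ^+ 3).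
Proof.
have S_neq0 : S x != 0 by rewrite gt_eqF ?snorm_gt0.
have -> : spring_scale = cst k - (k * l) \*: (fun y => (S y)^-1) by [].
apply: is_derive_eq.
  exact: is_deriveB (is_derive_cst k x v)
    (is_deriveZ (k * l) (is_derive_inv S_neq0 (is_derive_snorm _ e_gt0 x v))).
by rewrite /= scalerR; field.
Qed.

Definition spring_hess x : 'M[R]_3 := \matrix_(i, j)
  (spring_scale x * (i == j)%:R + k * l * (snormalize e x 0 i * snormalize e x 0 j / S x)).

Lemma hess3_spring_energy : hess3 p = spring_hess.
Proof.
apply/funext => x; apply/matrixP => i j; rewrite [RHS]mxE mxE.
have S_neq0 : S x != 0 by rewrite gt_eqF ?snorm_gt0.
rewrite (_ : (fun y => _) = spring_scale * (fun y => y 0 i)); last first.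
  by apply/funext => y; rewrite grad3_spring_energy mxE.
have [_ ->] :=
  is_deriveM (is_derive_spring_scale x (e3 R j)) (is_derive_coord x (e3 R j) 0 i).
by rewrite !scalerR dot3_e3 !mxE eqxx; field.
Qed.

Lemma differentiable_spring_scale x : differentiable spring_scale x.
Proof.
apply: differentiableB; first exact: differentiable_cst.
apply: differentiableM; first exact: differentiable_cst.
apply: differentiableV; first exact: differentiable_snorm _ e_gt0 x.
by rewrite gt_eqF ?snorm_gt0.
Qed.

Lemma differentiable_spring_energy x : differentiable p x.
Proof.
have -> : p = cst (k / 2) * ((S - cst l) * (S - cst l)).
  by apply/funext => y; rewrite /= -expr2.
apply: differentiableM; first exact: differentiable_cst.
have dSl : differentiable (S - cst l) x.
  exact: differentiableB (differentiable_snorm _ e_gt0 x) (differentiable_cst l x).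
exact: (differentiableM dSl dSl).
Qed.

Lemma differentiable_grad3_spring_energy x : differentiable (grad3 p) x.
Proof.
apply: differentiable_row => i.
rewrite (_ : (fun y => _) = spring_scale * (fun y => y 0 i)); last first.
  by apply/funext => y; rewrite grad3_spring_energy mxE.
apply: differentiableM; [exact: differentiable_spring_scale | exact: differentiable_coord].
Qed.

Definition spring_curvature_bound := k + k * l / r.

Lemma grad3_spring_energy_lipschitz x y :
  enorm3 (grad3 p x - grad3 p y) <= spring_curvature_bound * enorm3 (x - y).
Proof.
have -> : grad3 p x - grad3 p y =
    k *: (x - y) - (k * l) *: (snormalize e x - snormalize e y).
  by rewrite !grad3_spring_energy; apply/rowP => i; rewrite !mxE /spring_scale; ring.
have kl_ge0 : 0 <= k * l by rewrite mulr_ge0 // ltW.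
apply: le_trans (enorm3D _ _) _.
rewrite enorm3N !enorm3Z (gtr0_norm k_gt0) (ger0_norm kl_ge0) mulrDl lerD //.
by rewrite -mulrA ler_wpM2l // mulrC snormalize_lipschitz.
Qed.

Lemma convex3_spring_energy :
  convex3 (fun x => p x + spring_curvature_bound / 2 * enorm3 x ^+ 2).
Proof.
have r_gt0 : 0 < r by rewrite sqrtr_gt0.
have -> : (fun x => p x + spring_curvature_bound / 2 * enorm3 x ^+ 2) =
    (fun x => (k + k * l / (2 * r)) * enorm3 x ^+ 2 - k * l * S x + k / 2 * (e + l ^+ 2)).
  apply/funext => x; rewrite /spring_energy -/(S x) sqrrB (sqr_snorm _ e_gt0).
  rewrite -sqr_enorm3 -mulr_natr.
  by rewrite /spring_curvature_bound; field; rewrite gt_eqF.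
apply: (convex3_sqr_enorm3_sub_snorm _ e_gt0); first by rewrite mulr_ge0 // ltW.
rewrite (_ : 2 * _ * r = 2 * k * r + k * l); last by field; rewrite gt_eqF.
by rewrite lerDr !mulr_ge0 // ltW.
Qed.

Lemma hess3_spring_energy_lipschitz y z :
  `|hess3 p y - hess3 p z| <= 4 * k * l / e * enorm3 (y - z).
Proof.
have kl_ge0 : 0 <= k * l by rewrite mulr_ge0 // ltW.
have c_ge0 : 0 <= 4 * k * l / e.
  by apply: divr_ge0; [rewrite -mulrA mulr_ge0 | exact: ltW].
rewrite hess3_spring_energy.
apply: mx_norm_le => [|i j]; first by rewrite mulr_ge0 ?enorm3_ge0.
rewrite !mxE [X in `|X| <= _](_ : _ = k * l * ((i == j)%:R * ((S z)^-1 - (S y)^-1) +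
    (snormalize e y 0 i * snormalize e y 0 j / S y -
     snormalize e z 0 i * snormalize e z 0 j / S z))); last first.
  by rewrite /spring_scale !mxE; ring.
rewrite normrM (ger0_norm kl_ge0).
rewrite (_ : 4 * k * l / e * _ = k * l * (enorm3 (y - z) / e + 3 * enorm3 (y - z) / e)).
  2: by field; rewrite gt_eqF.
rewrite ler_wpM2l // (le_trans (ler_normD _ _)) //.
have scale_le : `|(i == j)%:R * ((S z)^-1 - (S y)^-1)| <= enorm3 (y - z) / e.
  rewrite normrM distrC -[leRHS]mul1r ler_pM ?snormV_lipschitz //.
  by case: (i == j); rewrite ?normr1 ?normr0.
by rewrite lerD // snormalize_outer_lipschitz.
Qed.

End SpringEnergy.

Theorem corollary5 (R : realType) (k l epsr : R) :
  0 < k -> 0 <= l -> 0 < epsr ->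
  (forall d, 0 <= spring_energy k l epsr d) /\
  twice_differentiable3 (spring_energy k l epsr) /\
  hess_locally_lipschitz3 (spring_energy k l epsr) /\
  (exists L : R, curvature_bounded3 L (spring_energy k l epsr)) /\
  (let pbar := spring_energy k l epsr in
   forall L2 : R, forall d, pbar d <= L2 -> pbar d = spring_energy k l epsr d).
Proof.
move=> k_gt0 l_ge0 e_gt0; split; first exact: spring_energy_ge0.
split.
  split=> x; first exact: differentiable_spring_energy.
  exact: differentiable_grad3_spring_energy.
split.
  move=> x; exists 1 => //; exists (4 * k * l / epsr) => y z _ _.
  exact: hess3_spring_energy_lipschitz.
split; last by [].
exists (spring_curvature_bound k l epsr).
by split; [exact: convex3_spring_energy | exact: grad3_spring_energy_lipschitz].
Qed.
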